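(* Consider the mixed support-set model described in the context, and let $\mathsf p,\mathsf q_1,\dots,\mathsf q_h,\mathsf r_1,\dots,\mathsf r_m$ be $1+h+m$ distinct sensors. Then (whenever the conditioning event has positive probability) $\Pr\Big(i\in\mathcal T_{\mathsf p}\ \Big|\ i\in\hat{\mathcal T}_{\mathsf p}^{\complement},\ i\in\bigcap_{l=1}^{h}\hat{\mathcal T}_{\mathsf q_l},\ i\in\bigcap_{l=1}^{m}\hat{\mathcal T}_{\mathsf r_l}^{\complement}\Big)$ equals, writing $\phi=\frac{T}{N-T}\epsilon$, $$\frac{(1-\epsilon)^{h}\epsilon^{m+1}\frac{J}{N}+\epsilon\,\phi^{h}(1-\phi)^{m}\frac{I}{N}}{(1-\epsilon)^{h}\epsilon^{m+1}\frac{J}{N}+h(1-\epsilon)\phi^{h-1}(1-\phi)^{m+1}\frac{I}{N}+(m+1)\,\epsilon\,\phi^{h}(1-\phi)^{m}\frac{I}{N}+\phi^{h}(1-\phi)^{m+1}\frac{N-J-(m+h+1)I}{N}}.$$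
   Context: Let $N>T\ge1$ be integers and $\Omega=\{1,\dots,N\}$; complements are taken in $\Omega$. A finite set $\mathcal L$ of sensors is given. Mixed support-set model: there are a fixed set $\mathcal J\subseteq\Omega$ with $|\mathcal J|=J$ and, for each sensor $\mathsf p\in\mathcal L$, a fixed set $\mathcal I_{\mathsf p}\subseteq\Omega$ with $|\mathcal I_{\mathsf p}|=I$, such that $\mathcal I_{\mathsf p}\cap\mathcal J=\emptyset$ for all $\mathsf p$, $\mathcal I_{\mathsf p}\cap\mathcal I_{\mathsf q}=\emptyset$ for $\mathsf p\ne\mathsf q$, and the true support set of sensor $\mathsf p$ is $\mathcal T_{\mathsf p}=\mathcal I_{\mathsf p}\cup\mathcal J$; thus $T=I+J$. Each sensor has a random estimated support set $\hat{\mathcal T}_{\mathsf p}\subseteq\Omega$. A random index $i$ is uniformly distributed on $\Omega$ and independent of all estimates. System model: there is $\epsilon$ with $0\le\epsilon\le (N-T)/N$, common to all sensors, such that for every sensor $\mathsf p$ and every $j\in\Omega$, $\Pr(j\in\hat{\mathcal T}_{\mathsf p})=1-\epsilon$ if $j\in\mathcal T_{\mathsf p}$ and $\Pr(j\in\hat{\mathcal T}_{\mathsf p})=\frac{T}{N-T}\epsilon$ if $j\notin\mathcal T_{\mathsf p}$ (so $\Pr(i\in\hat{\mathcal T}_{\mathsf p})=T/N$, detection probability $1-\epsilon$, miss probability $\epsilon$, false-alarm probability $\frac{T}{N-T}\epsilon$). For each fixed $j\in\Omega$, the events $\{j\in\hat{\mathcal T}_{\mathsf p}\}$, $\mathsf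 p\in\mathcal L$, are mutually independent. Convention: $0^0=1$ and a term with coefficient $0$ is $0$. *)

From mathcomp Require Import all_boot all_order all_algebra.
Set Implicit Arguments. Unset Strict Implicit. Unset Printing Implicit Defensive.
Import Order.TTheory GRing.Theory Num.Theory.
Local Open Scope ring_scope.

Definition Pr (R : numDomainType) (Omega : finType) (P : Omega -> R)
  (E : pred Omega) : R := \sum_(w | E w) P w.

Definition condPr (R : numFieldType) (Omega : finType) (P : Omega -> R)
  (A B : pred Omega) : R := Pr P (predI A B) / Pr P B.

Definition is_pmf (R : numDomainType) (Omega : finType) (P : Omega -> R) : Prop :=
  (forall w, 0 <= P w) /\ \sum_w P w = 1.

(* Condition on the value [k] of the uniform index [i].  Since [i] is independent
   of the estimates, and the sensors' estimates are independent at a fixed index,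
   the conditioning event factors over the sensors, each factor being [1 - eps]
   or [phi] according to whether [k] lies in that sensor's support.  The product
   therefore depends only on the class of [k]: [J], [I_p], some [I_(q l)], some
   [I_(r l)], or none of them.  Summing over [k] with class sizes [J], [I], ...,
   [I] and [N - J - (m + h + 1) I] gives numerator and denominator. *)

From mathcomp Require Import all_boot all_order all_algebra.
From mathcomp Require Import ring.
Import Order.TTheory GRing.Theory Num.Theory.
Local Open Scope ring_scope.
Set Implicit Arguments. Unset Strict Implicit. Unset Printing Implicit Defensive.

Lemma forall_setU1 (T : finType) (F : pred T) c (A : {set T}) :
  [forall s in c |: A, F s] = F c && [forall s in A, F s].
Proof.
apply/forall_inP/andP => [FcA | [Fc /forall_inP FA] s].
  by split; [|apply/forall_inP => s sA]; apply: FcA; rewrite !inE ?eqxx ?sA ?orbT.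
by rewrite in_setU1 => /predU1P[->|/FA].
Qed.

Lemma forall_imsetT (T U : finType) (f : T -> U) (F : pred U) :
  [forall s in f @: setT, F s] = [forall x, F (f x)].
Proof.
apply/forall_inP/forallP => [Ff x | Ff _ /imsetP[x _ ->]] //.
by apply: Ff; rewrite imset_f.
Qed.

Section Probability.

Variables (R : numDomainType) (Omega : finType) (P : Omega -> R).

Lemma eq_Pr (A B : pred Omega) : A =1 B -> Pr P A = Pr P B.
Proof. by move=> eqAB; apply: eq_bigl. Qed.

Lemma Pr_predID (A B : pred Omega) :
  Pr P A = Pr P [pred w | A w && B w] + Pr P [pred w | A w && ~~ B w].
Proof. exact: bigID. Qed.

Lemma Pr_partition (Y : finType) (pi : Omega -> Y) (E : pred Y) :
  Pr P [pred w | E (pi w)] = \sum_(y | E y) Pr P [pred w | pi w == y].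
Proof.
rewrite /Pr (partition_big pi E) //=; apply: eq_bigr => y Ey; apply: eq_bigl => w /=.
by case: eqP => [->|]; rewrite ?Ey ?andbF.
Qed.

Lemma Pr_uniform_index (n : nat) (Y : finType) (idx : Omega -> 'I_n) (est : Omega -> Y)
    (u : R) :
  (forall k, Pr P [pred w | idx w == k] = u) ->
  (forall k y, Pr P [pred w | (idx w == k) && (est w == y)] =
                 Pr P [pred w | idx w == k] * Pr P [pred w | est w == y]) ->
  forall (X : pred 'I_n) (Q : 'I_n -> pred Y),
  Pr P [pred w | X (idx w) && Q (idx w) (est w)] =
    u * \sum_(k | X k) Pr P [pred w | Q k (est w)].
Proof.
move=> idx_unif idx_indep X Q.
rewrite (Pr_partition (fun w => (idx w, est w)) (fun y => X y.1 && Q y.1 y.2)).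
transitivity (\sum_(k | X k) \sum_(y | Q k y) Pr P [pred w | (idx w == k) && (est w == y)]).
  by rewrite [RHS]pair_big_dep; apply: eq_bigr => -[k y] _; apply: eq_Pr => w; rewrite /= xpair_eqE.
rewrite mulr_sumr; apply: eq_bigr => k _.
by rewrite (Pr_partition est) mulr_sumr; apply: eq_bigr => y _; rewrite idx_indep idx_unif.
Qed.

Variables (L : finType) (Ev : L -> pred Omega).
Hypothesis Ev_indep :
  forall S : {set L}, Pr P [pred w | [forall s in S, Ev s w]] = \prod_(s in S) Pr P (Ev s).

Lemma Pr_indep_compl (A C : {set L}) : [disjoint A & C] ->
  Pr P [pred w | [forall s in A, Ev s w] && [forall s in C, ~~ Ev s w]] =
    \prod_(s in A) Pr P (Ev s) * \prod_(s in C) (1 - Pr P (Ev s)).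
Proof.
move: {2}#|C| (erefl #|C|) A => n; elim: n C => [|n IHn] C cardC A AC.
  have -> : C = set0 by apply/eqP; rewrite -cards_eq0 cardC.
  rewrite big_set0 mulr1 -Ev_indep; apply: eq_Pr => w /=.
  have -> : [forall s in set0, ~~ Ev s w] by apply/forall_inP => s; rewrite inE.
  by rewrite andbT.
have [c Cc] : {c | c \in C} by apply/sigW/set0Pn; rewrite -card_gt0 cardC.
have cardC' : #|C :\ c| = n by move: cardC; rewrite (cardsD1 c) Cc => -[].
have Ac : c \notin A by rewrite (disjointFl AC Cc).
have AC' : [disjoint A & C :\ c].
  by apply: disjointWr AC; apply: subD1set.
have cAC' : [disjoint c |: A & C :\ c].
  rewrite disjoints_subset; apply/subsetP => s; rewrite !inE negb_and negbK.
  by case/predU1P=> [->|As]; rewrite ?eqxx ?(disjointFr AC As) ?orbT.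
set E' := [pred w | [forall s in A, Ev s w] && [forall s in C :\ c, ~~ Ev s w]].
have split_c := Pr_predID E' (Ev c).
have Pr_Ec : Pr P [pred w | E' w && Ev c w] =
    Pr P (Ev c) * (\prod_(s in A) Pr P (Ev s) * \prod_(s in C :\ c) (1 - Pr P (Ev s))).
  rewrite mulrA -big_setU1 //= -IHn //; apply: eq_Pr => w /=.
  by rewrite forall_setU1; case: (Ev c w); rewrite ?andbT ?andbF.
rewrite IHn // Pr_Ec in split_c.
rewrite -(setD1K Cc) big_setU1 ?setD11 //= (@eq_Pr _ [pred w | E' w && ~~ Ev c w]).
  by apply/(addrI (Pr P [pred w | E' w && Ev c w])); rewrite Pr_Ec -split_c; ring.
by move=> w /=; rewrite forall_setU1; case: (Ev c w); rewrite ?andbT ?andbF.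
Qed.

Lemma Pr_detection_pattern (p : L) (h m : nat) (q : 'I_h -> L) (r : 'I_m -> L) :
  injective q -> injective r -> (forall l, q l != p) -> (forall l, r l != p) ->
  (forall l l', q l != r l') ->
  Pr P [pred w | [&& ~~ Ev p w, [forall l, Ev (q l) w] & [forall l, ~~ Ev (r l) w]]] =
    (1 - Pr P (Ev p)) * \prod_(l < h) Pr P (Ev (q l)) * \prod_(l < m) (1 - Pr P (Ev (r l))).
Proof.
move=> q_inj r_inj qp rp qr.
have disj : [disjoint q @: setT & p |: r @: setT].
  rewrite disjoints_subset; apply/subsetP => _ /imsetP[l _ ->].
  rewrite !inE negb_or qp; apply/imsetP => -[l' _ qr_eq].
  by move: (qr l l'); rewrite qr_eq eqxx.
have rp_notin : p \notin r @: setT.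
  by apply/imsetP => -[l _ pr_eq]; move: (rp l); rewrite pr_eq eqxx.
rewrite (@eq_Pr _ [pred w | [forall s in q @: setT, Ev s w] &&
                            [forall s in p |: r @: setT, ~~ Ev s w]]); last first.
  by move=> w /=; rewrite forall_setU1 !forall_imsetT andbCA.
rewrite Pr_indep_compl // big_setU1 //= !big_imset ?big_set /=; try exact: in2W.
by rewrite mulrCA mulrA.
Qed.

End Probability.

(* Stated relative to a base value [x0] so that the size of the complement of
   the classes never has to be computed. *)
Lemma sum_piecewise_const (V : zmodType) (K T : finType) (A : T -> {set K})
    (c : T -> V) (x0 : V) (g : K -> V) :
  (forall t t', t != t' -> [disjoint A t & A t']) ->
  (forall t, {in A t, forall k, g k = c t}) ->
  (forall k, (forall t, k \notin A t) -> g k = x0) ->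
  \sum_k g k = x0 *+ #|K| + \sum_t (c t - x0) *+ #|A t|.
Proof.
move=> A_disj g_in g_out.
have gE k : g k = x0 + \sum_t (if k \in A t then c t - x0 else 0).
  have [t0 kt0 | k_out] := pickP (fun t => k \in A t).
    rewrite (bigD1 t0) //= kt0 big1 => [|t t_ne]; first by rewrite addr0 (g_in t0) // addrC subrK.
    by rewrite (disjointFr (A_disj t0 t _) kt0) // eq_sym.
  by rewrite big1 ?addr0 => [|t _]; rewrite ?g_out ?k_out // => t; rewrite k_out.
rewrite (eq_bigr _ (fun k _ => gE k)) big_split sumr_const exchange_big /=.
by congr (_ + _); apply: eq_bigr => t _; rewrite -big_mkcond sumr_const.
Qed.

Lemma big_option (R : Type) (idx : R) (op : Monoid.law idx) (T : finType) (F : option T -> R) :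
  \big[op/idx]_u F u = op (F None) (\big[op/idx]_t F (Some t)).
Proof. by rewrite ![index_enum _]unlock [@Finite.enum in LHS]unlock /= big_cons big_map. Qed.

Lemma prod_ord_if1 (R : comPzRingType) (n : nat) (l0 : 'I_n) (x y : R) :
  \prod_(l < n) (if l == l0 then x else y) = x * y ^+ n.-1.
Proof.
rewrite (bigD1 l0) //= eqxx (eq_bigr (fun _ => y)) => [|l /negbTE -> //].
by rewrite prodr_const cardC1 card_ord.
Qed.

Section SupportClasses.

Variables (R : comPzRingType) (N h m : nat) (L : finType).
Variables (Jset : {set 'I_N}) (Iset : L -> {set 'I_N}) (p : L) (q : 'I_h -> L) (r : 'I_m -> L).
Hypothesis Iset_Jset : forall s, [disjoint Iset s & Jset].
Hypothesis Iset_disj : forall s s', s != s' -> [disjoint Iset s & Iset s'].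
Hypotheses (q_inj : injective q) (r_inj : injective r).
Hypotheses (qp : forall l, q l != p) (rp : forall l, r l != p) (qr : forall l l', q l != r l').
Variables (eps phi : R).

Definition detect (s : L) (k : 'I_N) : R := if k \in Iset s :|: Jset then 1 - eps else phi.

(* The probability of the conditioning event of the theorem given [i = k]. *)
Definition pattern_prob (k : 'I_N) : R :=
  (1 - detect p k) * \prod_(l < h) detect (q l) k * \prod_(l < m) (1 - detect (r l) k).

Local Notation cJ := ((1 - eps) ^+ h * eps ^+ m.+1).
Local Notation cp := (eps * phi ^+ h * (1 - phi) ^+ m).
Local Notation cq := ((1 - eps) * phi ^+ h.-1 * (1 - phi) ^+ m.+1).
Local Notation c0 := (phi ^+ h * (1 - phi) ^+ m.+1).

Lemma detect_J s k : k \in Jset -> detect s k = 1 - eps.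
Proof. by move=> kJ; rewrite /detect in_setU kJ orbT. Qed.

Lemma detect_own s0 s k : k \in Iset s0 -> detect s k = if s == s0 then 1 - eps else phi.
Proof.
move=> ks0; rewrite /detect in_setU (disjointFr (Iset_Jset s0) ks0) orbF.
by have [-> | /Iset_disj/disjointFl->] := eqVneq s s0; rewrite ?ks0.
Qed.

Lemma detect_out s k : k \notin Iset s :|: Jset -> detect s k = phi.
Proof. by move/negbTE; rewrite /detect => ->. Qed.

Lemma pattern_prob_J k : k \in Jset -> pattern_prob k = cJ.
Proof.
move=> kJ; rewrite /pattern_prob detect_J //.
under eq_bigr do rewrite detect_J //.
under [in X in _ * X]eq_bigr do rewrite detect_J //.
by rewrite subKr !prodr_const !card_ord exprS; ring.
Qed.

Lemma pattern_prob_p k : k \in Iset p -> pattern_prob k = cp.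
Proof.
move=> kp; rewrite /pattern_prob (detect_own _ kp) eqxx.
under eq_bigr do rewrite (detect_own _ kp) (negbTE (qp _)).
under [in X in _ * X]eq_bigr do rewrite (detect_own _ kp) (negbTE (rp _)).
by rewrite !prodr_const !card_ord; ring.
Qed.

Lemma pattern_prob_q l0 k : k \in Iset (q l0) -> pattern_prob k = cq.
Proof.
move=> kq; rewrite /pattern_prob (detect_own _ kq) eq_sym (negbTE (qp _)).
under eq_bigr do rewrite (detect_own _ kq) (inj_eq q_inj).
under [in X in _ * X]eq_bigr do rewrite (detect_own _ kq) eq_sym (negbTE (qr _ _)).
by rewrite prod_ord_if1 prodr_const card_ord exprS; ring.
Qed.

Lemma pattern_prob_r l0 k : k \in Iset (r l0) -> pattern_prob k = cp.
Proof.
move=> kr; rewrite /pattern_prob (detect_own _ kr) eq_sym (negbTE (rp _)).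
under eq_bigr do rewrite (detect_own _ kr) (negbTE (qr _ _)).
under [in X in _ * X]eq_bigr do rewrite (detect_own _ kr) (inj_eq r_inj) (fun_if (fun x => 1 - x)).
rewrite prodr_const card_ord prod_ord_if1.
by rewrite subKr -{2}(prednK (leq_trans (ltn0Sn l0) (ltn_ord l0))) exprS; ring.
Qed.

Lemma pattern_prob_out k :
  k \notin Jset -> k \notin Iset p -> (forall l, k \notin Iset (q l)) ->
  (forall l, k \notin Iset (r l)) -> pattern_prob k = c0.
Proof.
move=> kJ kp kq kr; rewrite /pattern_prob detect_out ?in_setU ?negb_or ?kp //.
under eq_bigr do rewrite detect_out ?in_setU ?negb_or ?kq //.
under [in X in _ * X]eq_bigr do rewrite detect_out ?in_setU ?negb_or ?kr //.
by rewrite !prodr_const !card_ord exprS; ring.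
Qed.

Definition sensor (u : option ('I_h + 'I_m)) : L :=
  match u with None => p | Some (inl l) => q l | Some (inr l) => r l end.

Lemma sensor_inj : injective sensor.
Proof.
case=> [[l|l]|] [[l'|l']|] //= E; rewrite ?(q_inj E) ?(r_inj E) //; exfalso.
all: move/eqP: E; rewrite ?(negbTE (qp _)) ?(negbTE (rp _)) ?(negbTE (qr _ _)) //.
all: by rewrite eq_sym ?(negbTE (qp _)) ?(negbTE (rp _)) ?(negbTE (qr _ _)).
Qed.

Definition support_class (t : option (option ('I_h + 'I_m))) : {set 'I_N} :=
  if t is Some u then Iset (sensor u) else Jset.

Definition class_value (t : option (option ('I_h + 'I_m))) : R :=
  match t with None => cJ | Some (Some (inl _)) => cq | Some _ => cp end.

Lemma support_class_disjoint t t' :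
  t != t' -> [disjoint support_class t & support_class t'].
Proof.
case: t t' => [u|] [u'|] //= ne; rewrite 1?disjoint_sym ?Iset_Jset //.
by apply: Iset_disj; rewrite (inj_eq sensor_inj); apply: contra ne => /eqP->.
Qed.

Lemma pattern_prob_class t :
  {in support_class t, forall k, pattern_prob k = class_value t}.
Proof.
case: t => [[[l|l]|]|] k /=.
- exact: pattern_prob_q.
- exact: pattern_prob_r.
- exact: pattern_prob_p.
- exact: pattern_prob_J.
Qed.

Variable I : nat.
Hypothesis card_Iset : forall s, #|Iset s| = I.

Lemma sum_pattern_prob :
  \sum_k pattern_prob k = c0 *+ N + (cJ - c0) *+ #|Jset| + (cp - c0) *+ I
                          + (cq - c0) *+ I *+ h + (cp - c0) *+ I *+ m.
Proof.
rewrite (sum_piecewise_const (x0 := c0) support_class_disjoint pattern_prob_class) ?card_ord; last first.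
  move=> k k_out; apply: pattern_prob_out => [|||l].
  - exact: k_out None.
  - exact: k_out (Some None).
  - by move=> l; exact: k_out (Some (Some (inl l))).
  - exact: k_out (Some (Some (inr l))).
have sum_card n (f : 'I_n -> L) (x : R) : \sum_(l < n) x *+ #|Iset (f l)| = x *+ I *+ n.
  by under eq_bigr do rewrite card_Iset; rewrite sumr_const card_ord.
by rewrite !big_option big_sumType /= card_Iset !sum_card !addrA.
Qed.

Lemma sum_pattern_prob_support :
  \sum_(k in Iset p :|: Jset) pattern_prob k = cp *+ I + cJ *+ #|Jset|.
Proof.
rewrite (eq_bigl [predU Iset p & Jset]) => [|k]; last by rewrite !inE.
rewrite bigU ?Iset_Jset // -(card_Iset p) -!sumr_const.
congr (_ + _); apply: eq_bigr => k.
- exact: pattern_prob_p.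
- exact: pattern_prob_J.
Qed.

End SupportClasses.

Theorem proposition5 (R : realFieldType) (N I J : nat)
  (L Omega : finType) (P : Omega -> R)
  (idx : Omega -> 'I_N) (est : Omega -> {ffun L -> {set 'I_N}})
  (Jset : {set 'I_N}) (Iset : L -> {set 'I_N}) (eps : R)
  (p : L) (h m : nat) (q : 'I_h -> L) (r : 'I_m -> L) :
  is_pmf P ->
  (I + J < N)%N -> (1 <= I + J)%N ->
  #|Jset| = J ->
  (forall s, #|Iset s| = I) ->
  (forall s, [disjoint Iset s & Jset]) ->
  (forall s s', s != s' -> [disjoint Iset s & Iset s']) ->
  0 <= eps -> eps <= (N%:R - (I + J)%:R) / N%:R ->
  (forall (s : L) (j : 'I_N),
     Pr P [pred w | j \in est w s] =
       if j \in Iset s :|: Jset then 1 - eps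
       else (I + J)%:R / (N%:R - (I + J)%:R) * eps) ->
  (forall (j : 'I_N) (S : {set L}),
     Pr P [pred w | [forall s in S, j \in est w s]] =
       \prod_(s in S) Pr P [pred w | j \in est w s]) ->
  (forall k : 'I_N, Pr P [pred w | idx w == k] = N%:R^-1) ->
  (forall (k : 'I_N) (f : {ffun L -> {set 'I_N}}),
     Pr P [pred w | (idx w == k) && (est w == f)] =
       Pr P [pred w | idx w == k] * Pr P [pred w | est w == f]) ->
  injective q -> injective r ->
  (forall l, q l != p) -> (forall l, r l != p) ->
  (forall l l', q l != r l') ->
  let B := [pred w | [&& idx w \notin est w p,
                         [forall l, idx w \in est w (q l)] &
                         [forall l, idx w \notin est w (r l)]]] in
  0 < Pr P B ->
  let phi := (I + J)%:R / (N%:R - (I + J)%:R) * eps in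
  condPr P [pred w | idx w \in Iset p :|: Jset] B =
    ((1 - eps) ^+ h * eps ^+ m.+1 * (J%:R / N%:R)
       + eps * phi ^+ h * (1 - phi) ^+ m * (I%:R / N%:R))
    / ((1 - eps) ^+ h * eps ^+ m.+1 * (J%:R / N%:R)
       + h%:R * (1 - eps) * phi ^+ h.-1 * (1 - phi) ^+ m.+1 * (I%:R / N%:R)
       + (m.+1)%:R * eps * phi ^+ h * (1 - phi) ^+ m * (I%:R / N%:R)
       + phi ^+ h * (1 - phi) ^+ m.+1
           * ((N%:R - J%:R - (m + h).+1%:R * I%:R) / N%:R)).
Proof.
move=> _ _ _ card_J card_I IJ_disj II_disj _ _ marg indep unif idx_est
  q_inj r_inj qp rp qr B _ phi.
pose Q k (f : {ffun L -> {set 'I_N}}) :=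
  [&& k \notin f p, [forall l, k \in f (q l)] & [forall l, k \notin f (r l)]].
have Pr_pattern k : Pr P [pred w | Q k (est w)] = pattern_prob Jset Iset p q r eps phi k.
  have Pr_detect s : Pr P [pred w | k \in est w s] = detect Jset Iset eps phi s k := marg s k.
  rewrite (Pr_detection_pattern (Ev := fun s => [pred w | k \in est w s])) //; last exact: indep.
  by rewrite Pr_detect (eq_bigr _ (fun l _ => Pr_detect (q l)))
             (eq_bigr _ (fun l _ => congr1 (fun x => 1 - x) (Pr_detect (r l)))).
have Pr_num : Pr P (predI [pred w | idx w \in Iset p :|: Jset] B) =
    N%:R^-1 * \sum_(k in Iset p :|: Jset) pattern_prob Jset Iset p q r eps phi k.
  by rewrite -(eq_bigr _ (fun k _ => Pr_pattern k)); exact: Pr_uniform_index.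
have Pr_B : Pr P B = N%:R^-1 * \sum_k pattern_prob Jset Iset p q r eps phi k.
  by rewrite -(eq_bigr _ (fun k _ => Pr_pattern k)); exact: (Pr_uniform_index _ _ predT).
rewrite /condPr Pr_num Pr_B (sum_pattern_prob_support IJ_disj II_disj qp rp _ _ card_I).
rewrite (sum_pattern_prob IJ_disj II_disj q_inj r_inj qp rp qr _ _ card_I) card_J.
by congr (_ / _); ring.
Qed.
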